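(* Let $n\ge3$, let $\mathcal{M}\subseteq\{1,\dots,n\}$ be a sample set with sampling matrix $A=\mathbf{I}_{\mathcal{M}}$, let $y\in\mathbb{R}^{|\mathcal{M}|}$ (indexed by $\mathcal{M}$) be measurements of the form $y=Az^\diamond+\eta$ with $\|\eta\|_\infty\le\varepsilon$ and $\varepsilon>0$. Let $z\in\mathbb{R}^n$ be feasible for $\min_{z'}\|Dz'\|_1$ subject to $\|Az'-y\|_\infty\le\varepsilon$. Define the active set $\mathcal{A}=\{i\in\mathcal{M}: |y_i-z_i|=\varepsilon\}$, its subsets $\mathcal{A}_\uparrow=\{i\in\mathcal{M}: y_i-z_i=\varepsilon\}$ and $\mathcal{A}_\downarrow=\{i\in\mathcal{M}: y_i-z_i=-\varepsilon\}$, and $\bar{\mathcal{A}}=\mathcal{M}\setminus\mathcal{A}$. Then $z$ is a minimizer of this problem if and only if there exists $u\in\mathbb{R}^{n-2}$ such that $$(D^{\mathsf{T}})_{\overline{\mathcal{M}}\cup\bar{\mathcal{A}}}\,u=\mathbf{0},\quad u_{\mathcal{I}}=\mathrm{sign}(Dz)_{\mathcal{I}},\quad \|u\|_\infty\le1,\quad (D^{\mathsf{T}})_{\mathcal{A}_\uparrow}u\ge\mathbf{0},\quad (D^{\mathsf{T}})_{\mathcal{A}_\downarrow}u\le\mathbf{0},$$ where $\mathcal{I}$ is the set of indices of the nonzero entries of $Dz$ and $\overline{\mathcal{M}}=\{1,\dots,n\}\setminus\mathcal{M}$ (inequalities entrywise).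
   Context: $D\in\mathbb{R}^{(n-2)\times n}$ is the second-order difference operator with $k$-th row having entries $1,-2,1$ in columns $k,k+1,k+2$. $\mathbf{I}_{\mathcal{M}}$ consists of the rows of the identity indexed by $\mathcal{M}$, so $Az=z_{\mathcal{M}}$. For a matrix $M$ and index set $\mathcal{S}$, $M_{\mathcal{S}}$ denotes the rows of $M$ indexed by $\mathcal{S}$; $v_{\mathcal{S}}$ denotes the subvector of $v$. $\mathrm{sign}$ is entrywise with $\mathrm{sign}(0)=0$. *)

From mathcomp Require Import all_boot all_order all_algebra.
Set Implicit Arguments. Unset Strict Implicit. Unset Printing Implicit Defensive.
Import Order.TTheory GRing.Theory Num.Theory.
Local Open Scope ring_scope.

Definition D2 (R : numDomainType) (n : nat) : 'M[R]_(n - 2, n) :=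
  \matrix_(k < n - 2, j < n)
    (if (j == k :> nat) then 1
     else if (j == k.+1 :> nat) then -2
     else if (j == k.+2 :> nat) then 1 else 0).

Definition tv2 (R : numDomainType) (n : nat) (z : 'cV[R]_n) : R :=
  \sum_(k < n - 2) `|(D2 R n *m z) k 0|.

(* feasibility: ||A z - y||_oo <= eps, with A = I_M, y indexed by M *)
Definition feasible (R : numDomainType) (n : nat) (M : {set 'I_n})
  (y : 'I_n -> R) (eps : R) (z : 'cV[R]_n) : Prop :=
  forall i, i \in M -> `|z i 0 - y i| <= eps.

Definition is_minimizer (R : numDomainType) (n : nat) (M : {set 'I_n})
  (y : 'I_n -> R) (eps : R) (z : 'cV[R]_n) : Prop :=
  feasible M y eps z /\
  forall z' : 'cV[R]_n, feasible M y eps z' -> tv2 z <= tv2 z'.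

From mathcomp Require Import all_boot all_order all_algebra.
From mathcomp Require Import ring lra.
Set Implicit Arguments. Unset Strict Implicit. Unset Printing Implicit Defensive.
Import Order.TTheory GRing.Theory Num.Theory.
Local Open Scope ring_scope.

(* This is the KKT system of the convex program: sufficiency is weak duality,
   ||Dz||_1 = <u, Dz> = <D^T u, z> <= <D^T u, z'> = <u, Dz'> <= ||Dz'||_1 for
   every feasible z', the middle step because D^T u has the sign of z' - z at
   the active samples and vanishes at the others.  For necessity, at a
   minimizer the one-sided directional derivative of ||D.||_1 is nonnegative
   along every direction that keeps the active constraints satisfied.  The
   certificate u is a solution of a finite system of linear inequalities, and
   Fourier-Motzkin elimination shows it is solvable: every nonnegative
   combination of these inequalities with vanishing left-hand side is
   dominated by such a directional derivative, hence has a nonnegative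
   right-hand side. *)

Section FourierMotzkin.
Variable R : realFieldType.

(* [(a, b)] encodes the inequality [dot p a x <= b]; coefficients are indexed
   by [nat] so that the number [p] of unknowns can shrink during elimination. *)
Definition ineq := ((nat -> R) * R)%type.

Definition dot (p : nat) (a x : nat -> R) : R := \sum_(i < p) a i * x i.

Definition ineq_add (e1 e2 : ineq) : ineq := (fun i => e1.1 i + e2.1 i, e1.2 + e2.2).

Definition ineq_scale (t : R) (e : ineq) : ineq := (fun i => t * e.1 i, t * e.2).

Inductive cone (I : Type) (c : I -> ineq) : ineq -> Prop :=
  | cone_gen i : cone c (c i)
  | cone_add e1 e2 : cone c e1 -> cone c e2 -> cone c (ineq_add e1 e2)
  | cone_scale t e : 0 <= t -> cone c e -> cone c (ineq_scale t e).

Lemma cone_trans (I J : Type) (c : I -> ineq) (c' : J -> ineq) :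
  (forall j, cone c (c' j)) -> forall e, cone c' e -> cone c e.
Proof.
move=> sub e; elim=> [j|e1 e2 _ h1 _ h2|t e0 t0 _ h]; first exact: sub.
  exact: cone_add.
exact: cone_scale.
Qed.

Lemma cone_coef0 (I : Type) (c : I -> ineq) k :
  (forall i, (c i).1 k = 0) -> forall e, cone c e -> e.1 k = 0.
Proof.
move=> c0 e; elim=> [i|e1 e2 _ h1 _ h2|t e0 _ _ h] //=.
  by rewrite h1 h2 addr0.
by rewrite h mulr0.
Qed.

Lemma dot_extend p a x t :
  dot p.+1 a (fun i => if (i < p)%N then x i else t) = dot p a x + a p * t.
Proof.
rewrite /dot big_ord_recr /= ltnn; congr (_ + _).
by apply: eq_bigr => i _; rewrite ltn_ord.
Qed.

Lemma exists_between (Ls Us : seq R) :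
  {in Ls & Us, forall l u, l <= u} ->
  exists t, {in Ls, forall l, l <= t} /\ {in Us, forall u, t <= u}.
Proof.
move=> leLU; pose lo := \big[Num.min/0]_(u <- Us) u.
exists (\big[Num.max/lo]_(l <- Ls | l \in Ls) l); split=> [l Ll|u Uu].
  exact: (le_bigmax_seq lo l (mem Ls) id Ll).
apply: bigmax_le => [|l Ll]; first exact: (ge_bigmin_seq 0 u xpredT id Uu).
exact: leLU.
Qed.

Lemma dot_combine p s t (e1 e2 : ineq) x :
  dot p (ineq_add (ineq_scale s e1) (ineq_scale t e2)).1 x
  = s * dot p e1.1 x + t * dot p e2.1 x.
Proof. by rewrite /dot !mulr_sumr -big_split; apply: eq_bigr => i _ /=; ring. Qed.

Lemma dotN p a x : dot p (fun i => - a i) x = - dot p a x.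
Proof. by rewrite /dot -sumrN; apply: eq_bigr => i _; rewrite mulNr. Qed.

Section Elimination.
Variables (p : nat) (I : finType) (c : I -> ineq).

Let slope i := (c i).1 p.

Definition elim_index :=
  ({i | slope i == 0} + {i | 0 < slope i} * {i | slope i < 0})%type.

Definition eliminate (e : elim_index) : ineq :=
  match e with
  | inl i => c (val i)
  | inr (i, j) =>
      ineq_add (ineq_scale (- slope (val j)) (c (val i)))
               (ineq_scale (slope (val i)) (c (val j)))
  end.

Lemma eliminate_in_cone e : cone c (eliminate e).
Proof.
case: e => [i|[i j]] /=; first exact: cone_gen.
apply: cone_add; apply: cone_scale; try exact: cone_gen.
  by rewrite oppr_ge0 ltW // (valP j).
by rewrite ltW // (valP i).
Qed.

Lemma eliminate_slope e : (eliminate e).1 p = 0.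
Proof.
case: e => [i|[i j]] /=; first exact/eqP/(valP i).
by rewrite -/(slope _) -/(slope _); ring.
Qed.

Lemma eliminate_lift x :
  (forall e, dot p (eliminate e).1 x <= (eliminate e).2) ->
  exists t, forall i,
    dot p.+1 (c i).1 (fun k => if (k < p)%N then x k else t) <= (c i).2.
Proof.
move=> sol.
pose gap i := (c i).2 - dot p (c i).1 x.
pose bound i := gap i / slope i.
have gapE i : slope i != 0 -> gap i = slope i * bound i.
  by move=> s0; rewrite /bound mulrCA mulfV ?mulr1.
pose N := {i | slope i < 0}; pose P := {i | 0 < slope i}.
have [|t [lo hi]] := @exists_between (codom (fun j : N => bound (val j)))
                                     (codom (fun i : P => bound (val i))).
  move=> _ _ /codomP [j ->] /codomP [i ->].
  have si : 0 < slope (val i) := valP i; have sj : slope (val j) < 0 := valP j.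
  have key : 0 <= (slope (val i) * - slope (val j)) * (bound (val i) - bound (val j)).
    have gi := gapE _ (lt0r_neq0 si); have gj := gapE _ (ltr0_neq0 sj).
    have -> : (slope (val i) * - slope (val j)) * (bound (val i) - bound (val j))
            = - slope (val j) * gap (val i) + slope (val i) * gap (val j).
      by rewrite gi gj; ring.
    have := sol (inr (i, j)); rewrite /= dot_combine /gap; nra.
  by move: key; rewrite pmulr_rge0 ?subr_ge0 // mulr_gt0 // oppr_gt0.
exists t => i; rewrite dot_extend -subr_ge0 opprD addrA -/(gap i).
case: (ltrgtP (slope i) 0) => si.
- have /= bt := lo _ (codom_f (fun j : N => bound (val j)) (exist _ i si)).
  by rewrite gapE ?ltr0_neq0 // -mulrBr mulr_le0 ?subr_le0 // ltW.
- have /= tb := hi _ (codom_f (fun j : P => bound (val j)) (exist _ i si)).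
  by rewrite gapE ?lt0r_neq0 // -mulrBr mulr_ge0 ?subr_ge0 // ltW.
- have := sol (inl (exist _ i (introT eqP si))).
  by rewrite /= -/(slope i) si mul0r subr0 subr_ge0.
Qed.

End Elimination.

Theorem fourier_motzkin p (I : finType) (c : I -> ineq) :
  (forall a b, cone c (a, b) -> (forall k, (k < p)%N -> a k = 0) -> 0 <= b) ->
  exists x, forall i, dot p (c i).1 x <= (c i).2.
Proof.
elim: p I c => [|p IH] I c infeasible.
  exists (fun _ => 0) => i; rewrite /dot big_ord0.
  by case E: (c i) => [a b]; apply: (infeasible a) => //; rewrite -E; apply: cone_gen.
have [|x sol] := IH _ (@eliminate p _ c).
  move=> a b cab a0.
  apply: (infeasible a b (cone_trans (@eliminate_in_cone p _ c) cab)) => k.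
  rewrite ltnS leq_eqVlt => /predU1P [->|/a0 //].
  exact: (cone_coef0 (@eliminate_slope p _ c) cab).
by have [t lift] := eliminate_lift sol; exists (fun k => if (k < p)%N then x k else t).
Qed.

End FourierMotzkin.

Section DirectionalDerivativeNorm.
Variable R : realDomainType.

Definition dnorm (w v : R) : R := if w == 0 then `|v| else Num.sg w * v.

Lemma dnormr0 w : dnorm w 0 = 0.
Proof. by rewrite /dnorm normr0 mulr0; case: ifP. Qed.

Lemma dnormD w v1 v2 : dnorm w (v1 + v2) <= dnorm w v1 + dnorm w v2.
Proof. by rewrite /dnorm; case: ifP => _; rewrite ?ler_normD ?mulrDr. Qed.

Lemma dnormZ w t v : 0 <= t -> dnorm w (t * v) = t * dnorm w v.
Proof. by move=> t0; rewrite /dnorm normrM ger0_norm // mulrCA; case: ifP. Qed.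

Lemma normrD_dnorm w v t :
  0 <= t -> (w != 0 -> t * `|v| <= `|w|) -> `|w + t * v| = `|w| + t * dnorm w v.
Proof.
move=> t0 small; rewrite /dnorm; case: eqP => [->|/eqP w0].
  by rewrite !add0r normr0 add0r normrM ger0_norm.
have sg_norm : `|Num.sg w| = 1 by rewrite normr_sg w0.
have lo : - `|v| <= Num.sg w * v by apply: lerNnormlW; rewrite normrM sg_norm mul1r.
rewrite -[LHS]mul1r -sg_norm -normrM mulrDr -normrEsg mulrCA ger0_norm //.
have := ler_wpM2l t0 lo; have := small w0; lra.
Qed.

End DirectionalDerivativeNorm.

Section SmallSteps.
Variable R : realFieldType.

Definition near0 (P : R -> Prop) := exists2 c, 0 < c & forall t, 0 < t <= c -> P t.

Lemma near0_and (P Q : R -> Prop) : near0 P -> near0 Q -> near0 (fun t => P t /\ Q t).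
Proof.
move=> [c c0 Pc] [d d0 Qd]; exists (Num.min c d); first by rewrite lt_min c0.
move=> t /andP [t0]; rewrite le_min => /andP [tc td].
by split; [apply: Pc|apply: Qd]; rewrite t0.
Qed.

Lemma near0_all (I : finType) (P : I -> R -> Prop) :
  (forall i, near0 (P i)) -> near0 (fun t => forall i, P i t).
Proof.
move=> allP; suff [c c0 Pc] : near0 (fun t => forall i, i \in enum I -> P i t).
  by exists c => // t tc i; apply: Pc; rewrite ?mem_enum.
elim: (enum I) => [|i s IH]; first by exists 1.
have [c c0 Pc] := near0_and (allP i) IH.
by exists c => // t /Pc [Pit Pst] j; rewrite inE => /predU1P [->|/Pst].
Qed.

Lemma near0_le w v e : w <= e -> (w = e -> v <= 0) -> near0 (fun t => w + t * v <= e).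
Proof.
move=> we edge; case: (lerP v 0) => v0.
  by exists 1 => // t /andP [t0 _]; have := mulr_ge0_le0 (ltW t0) v0; lra.
have {edge}lt_we : w < e by rewrite lt_neqAle we andbT; apply/eqP => /edge; lra.
exists ((e - w) / v) => [|t /andP [_ te]]; first by rewrite divr_gt0 // subr_gt0.
by have := ler_wpM2r (ltW v0) te; rewrite divfK ?gt_eqF //; lra.
Qed.

Lemma near0_normr_le w v e :
  `|w| <= e -> (w = e -> v <= 0) -> (w = - e -> 0 <= v) ->
  near0 (fun t => `|w + t * v| <= e).
Proof.
rewrite ler_norml => /andP [lo hi] top bot.
have lo' : - w <= e by rewrite lerNl.
have bot' : - w = e -> - v <= 0 by move=> we; rewrite oppr_le0 bot // -we opprK.
have [c c0 Pc] := near0_and (near0_le hi top) (near0_le lo' bot').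
by exists c => // t /Pc []; rewrite ler_norml; lra.
Qed.

Lemma near0_normrD_dnorm w v : near0 (fun t => `|w + t * v| = `|w| + t * dnorm w v).
Proof.
have [w0|w0] := eqVneq w 0.
  by exists 1 => // t /andP [t0 _]; apply: normrD_dnorm (ltW t0) _; rewrite w0 eqxx.
exists (`|w| / (`|v| + 1)) => [|t /andP [t0 tc]].
  by rewrite divr_gt0 ?normr_gt0 // ltr_wpDl.
apply: normrD_dnorm (ltW t0) (fun _ => _).
have := ler_wpM2r (addr_ge0 (normr_ge0 v) ler01) tc; rewrite divfK; last first.
  by rewrite gt_eqF // ltr_wpDl.
have := normr_ge0 v; nra.
Qed.

End SmallSteps.

Lemma sum_mulmx_trmx (R : comPzRingType) m n (D : 'M[R]_(m, n))
    (u : 'cV[R]_m) (x : 'cV[R]_n) :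
  \sum_k u k 0 * (D *m x) k 0 = \sum_j (D^T *m u) j 0 * x j 0.
Proof.
under eq_bigr do rewrite mxE mulr_sumr.
under [RHS]eq_bigr do rewrite mxE mulr_suml.
rewrite exchange_big; apply: eq_bigr => j _; apply: eq_bigr => k _.
by rewrite mxE mulrCA mulrA.
Qed.

Section L1Optimality.
Variables (R : realFieldType) (m n : nat) (D : 'M[R]_(m, n)).
Variables (M : {set 'I_n}) (y : 'I_n -> R) (eps : R) (z : 'cV[R]_n).
Hypothesis feasible_z : feasible M y eps z.

Definition l1D (x : 'cV[R]_n) : R := \sum_k `|(D *m x) k 0|.

Definition up_active j := (j \in M) && (y j - z j 0 == eps).
Definition down_active j := (j \in M) && (y j - z j 0 == - eps).

Definition feasible_dir (d : 'cV[R]_n) :=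
  (forall j, up_active j -> 0 <= d j 0) /\ (forall j, down_active j -> d j 0 <= 0).

(* One-sided derivative of [(x, s) |-> \sum_k |(D x)_k + s_k|] at [(z, 0)] in
   the direction [(d, a)]. *)
Definition dl1D (a : nat -> R) (d : 'cV[R]_n) : R :=
  \sum_k dnorm ((D *m z) k 0) (a k + (D *m d) k 0).

Lemma near0_feasible d : feasible_dir d -> near0 (fun t => feasible M y eps (z + t *: d)).
Proof.
move=> [up down].
have [c c0 Pc] : near0 (fun t => forall j, j \in M -> `|z j 0 - y j + t * d j 0| <= eps).
  apply: near0_all => j; have [jM|jM] := boolP (j \in M); last first.
    by exists 1 => // t _ /negP.
  have [||c c0 Pc] := near0_normr_le (v := d j 0) (feasible_z jM).
  - by move=> e; apply: down; rewrite /down_active jM -e opprB eqxx.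
  - by move=> e; apply: up; rewrite /up_active jM -opprB e opprK eqxx.
  by exists c => // t /Pc.
by exists c => // t /Pc fz j jM; rewrite !mxE addrAC; apply: fz.
Qed.

Lemma near0_l1D d : near0 (fun t => l1D (z + t *: d) = l1D z + t * dl1D (fun _ => 0) d).
Proof.
have [c c0 Pc] := near0_all (fun k => near0_normrD_dnorm ((D *m z) k 0) ((D *m d) k 0)).
exists c => // t /Pc eqk; rewrite /l1D /dl1D mulr_sumr -big_split; apply: eq_bigr => k _.
by rewrite mulmxDr -scalemxAr [in LHS]mxE [X in _ + X]mxE add0r eqk.
Qed.

Lemma minimizer_dl1D_ge0 d :
  (forall z', feasible M y eps z' -> l1D z <= l1D z') -> feasible_dir d ->
  0 <= dl1D (fun _ => 0) d.
Proof.
move=> zmin dd; have [c c0 Pc] := near0_and (near0_feasible dd) (near0_l1D d).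
have /Pc [fc lc] : 0 < c <= c by rewrite c0 lexx.
by have := zmin _ fc; rewrite lc lerDl pmulr_rge0.
Qed.

Lemma feasible_dir0 : feasible_dir 0.
Proof. by split=> j _; rewrite mxE. Qed.

Lemma feasible_dirD d1 d2 : feasible_dir d1 -> feasible_dir d2 -> feasible_dir (d1 + d2).
Proof.
move=> [up1 down1] [up2 down2]; split=> j act; rewrite mxE.
  by rewrite addr_ge0 ?up1 ?up2.
by have := down1 j act; have := down2 j act; lra.
Qed.

Lemma feasible_dirZ t d : 0 <= t -> feasible_dir d -> feasible_dir (t *: d).
Proof.
move=> t0 [up down]; split=> j act; rewrite mxE.
  by rewrite mulr_ge0 ?up.
by rewrite mulr_ge0_le0 ?down.
Qed.

Lemma feasible_dir_delta j s :
  (up_active j -> 0 <= s) -> (down_active j -> s <= 0) ->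
  feasible_dir (s *: delta_mx j (0 : 'I_1)).
Proof.
move=> up down; split=> i act; rewrite !mxE andbT; have [ij|] := eqVneq i j;
  by rewrite ?mulr1 ?mulr0 // ?up ?down -?ij.
Qed.

Lemma dl1DD a1 a2 d1 d2 :
  dl1D (fun i => a1 i + a2 i) (d1 + d2) <= dl1D a1 d1 + dl1D a2 d2.
Proof.
rewrite /dl1D -big_split ler_sum // => k _ /=.
rewrite mulmxDr [X in _ + _ + X]mxE addrACA; exact: dnormD.
Qed.

Lemma dl1DZ t a d : 0 <= t -> dl1D (fun i => t * a i) (t *: d) = t * dl1D a d.
Proof.
move=> t0; rewrite /dl1D mulr_sumr; apply: eq_bigr => k _.
by rewrite -scalemxAr [X in _ + X]mxE -mulrDr dnormZ.
Qed.

Lemma dl1D_eq0 (a : nat -> R) d :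
  (forall k : 'I_m, a k + (D *m d) k 0 = 0) -> dl1D a d = 0.
Proof. by move=> a0; rewrite /dl1D big1 // => k _; rewrite a0 dnormr0. Qed.

Definition unit_coef (k : 'I_m) (v : R) (i : nat) : R := if i == k then v else 0.

Definition colD (j : 'I_n) (i : nat) : R := if insub i is Some k then D k j else 0.

Lemma dl1D_unit_coef k v : dl1D (unit_coef k v) 0 = dnorm ((D *m z) k 0) v.
Proof.
have D0 i : (D *m (0 : 'cV_n)) i 0 = 0 by rewrite mulmx0 mxE.
rewrite /dl1D (bigD1 k) //= big1 => [|i ik]; rewrite D0 addr0 /unit_coef.
  by rewrite eqxx addr0.
by have /negbTE -> : (i : nat) != k by []; rewrite dnormr0.
Qed.

Lemma dot_unit_coef k v x : dot m (unit_coef k v) x = v * x k.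
Proof.
rewrite /dot (bigD1 k) //= big1 => [|i ik]; rewrite /unit_coef ?eqxx ?addr0 //.
by have /negbTE -> : (i : nat) != k by []; rewrite mul0r.
Qed.

Lemma dot_colD j x : dot m (colD j) x = (D^T *m \col_k x k) j 0.
Proof. by rewrite mxE; apply: eq_bigr => k _; rewrite /colD valK !mxE. Qed.

Lemma mulmx_delta k j s : (D *m (s *: delta_mx j (0 : 'I_1))) k 0 = s * D k j.
Proof. by rewrite -scalemxAr -colE !mxE. Qed.

(* A solution [x] of these inequalities gives the dual certificate [\col_k x k]:
   for [s = 1, -1] the inequality [s u_k <= dnorm w_k s] says that [u_k] is a
   subgradient of [|.|] at [w_k = (D z)_k]. *)
Definition dual_system (e : ('I_m * bool) + ('I_n * bool)) : ineq R :=
  match e with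
  | inl (k, b) => (unit_coef k ((-1) ^+ b), dnorm ((D *m z) k 0) ((-1) ^+ b))
  | inr (j, true) => if up_active j then (fun _ => 0, 0) else (colD j, 0)
  | inr (j, false) =>
      if down_active j then (fun _ => 0, 0) else (fun i => - colD j i, 0)
  end.

Lemma dual_system_dominated e :
  cone dual_system e -> exists2 d, feasible_dir d & dl1D e.1 d <= e.2.
Proof.
have zero_dominated : exists2 d, feasible_dir d & dl1D (fun _ => 0) d <= 0.
  exists 0; first exact: feasible_dir0.
  by rewrite dl1D_eq0 // => k; rewrite mulmx0 mxE addr0.
elim=> [[[k b]|[j []]]|e1 e2 _ [d1 fd1 le1] _ [d2 fd2 le2]|t e0 t0 _ [d fd le]] /=.
- by exists 0; rewrite ?dl1D_unit_coef //; apply: feasible_dir0.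
- case: ifP => [//|/negbT upj]; exists (-1 *: delta_mx j 0).
    by apply: feasible_dir_delta; rewrite ?(negbTE upj) // lerN10.
  by rewrite dl1D_eq0 // => k; rewrite mulmx_delta /= /colD valK mulN1r subrr.
- case: ifP => [//|/negbT downj]; exists (1 *: delta_mx j 0).
    by apply: feasible_dir_delta; rewrite ?(negbTE downj) // ler01.
  by rewrite dl1D_eq0 // => k; rewrite mulmx_delta /= /colD valK mul1r addNr.
- exists (d1 + d2); first exact: feasible_dirD.
  exact: le_trans (dl1DD _ _ _ _) (lerD le1 le2).
- by exists (t *: d); rewrite ?dl1DZ ?ler_wpM2l //; apply: feasible_dirZ.
Qed.

Definition dual_certificate (u : 'cV[R]_m) :=
  [/\ forall k, (D *m z) k 0 != 0 -> u k 0 = Num.sg ((D *m z) k 0),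
      forall k, `|u k 0| <= 1,
      forall j, ~~ up_active j -> (D^T *m u) j 0 <= 0 &
      forall j, ~~ down_active j -> 0 <= (D^T *m u) j 0].

Lemma minimizer_dual_certificate :
  (forall z', feasible M y eps z' -> l1D z <= l1D z') -> exists u, dual_certificate u.
Proof.
move=> zmin; have [|x sol] := fourier_motzkin (p := m) (c := dual_system).
  move=> a b /dual_system_dominated [d fd le] a0; apply: le_trans le.
  rewrite (_ : dl1D a d = dl1D (fun _ => 0) d); first exact: minimizer_dl1D_ge0.
  by apply: eq_bigr => k _; rewrite a0.
have subgrad (k : 'I_m) :
    x k <= dnorm ((D *m z) k 0) 1 /\ - x k <= dnorm ((D *m z) k 0) (-1).
  have := sol (inl (k, false)); have := sol (inl (k, true)).
  by rewrite /= !dot_unit_coef expr0 expr1 mul1r mulN1r.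
exists (\col_k x k); split=> [k w0|k|j upj|j downj].
- by rewrite mxE; have [] := subgrad k; rewrite /dnorm (negbTE w0) mulr1 mulrN1; lra.
- rewrite mxE; have [] := subgrad k; rewrite ler_norml /dnorm.
  case: ifP => [_|/negbT w0]; rewrite ?normrN ?normr1 ?mulr1 ?mulrN1 => lo hi.
    by apply/andP; split; lra.
  have : `|Num.sg ((D *m z) k 0)| <= 1 by rewrite normr_sg w0.
  by rewrite ler_norml => /andP [] *; apply/andP; split; lra.
- by have := sol (inr (j, true)); rewrite /= (negbTE upj) /= dot_colD.
- by have := sol (inr (j, false)); rewrite /= (negbTE downj) /= dotN dot_colD oppr_le0.
Qed.

Lemma dual_certificate_mul_ge0 u z' j :
  dual_certificate u -> feasible M y eps z' ->
  0 <= (D^T *m u) j 0 * (z' j 0 - z j 0).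
Proof.
move=> [_ _ nup ndown] fz'.
have up_ge0 : up_active j -> 0 <= z' j 0 - z j 0.
  by move=> /andP [jM /eqP e]; have := fz' j jM; rewrite ler_norml => /andP []; lra.
have down_le0 : down_active j -> z' j 0 - z j 0 <= 0.
  by move=> /andP [jM /eqP e]; have := fz' j jM; rewrite ler_norml => /andP []; lra.
have [uj|uj] := boolP (up_active j); have [dj|dj] := boolP (down_active j).
- by rewrite [_ - _](@le_anti _ _ _ 0) ?mulr0 // down_le0 ?up_ge0.
- exact: mulr_ge0 (ndown _ dj) (up_ge0 uj).
- exact: mulr_le0 (nup _ uj) (down_le0 dj).
- by rewrite [(D^T *m u) j 0](@le_anti _ _ _ 0) ?mul0r // nup ?ndown.
Qed.

Lemma dual_certificate_minimizer u :
  dual_certificate u -> forall z', feasible M y eps z' -> l1D z <= l1D z'.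
Proof.
move=> cert z' fz'; have [sgu normu _ _] := cert.
have -> : l1D z = \sum_k u k 0 * (D *m z) k 0.
  apply: eq_bigr => k _; have [->|w0] := eqVneq ((D *m z) k 0) 0.
    by rewrite normr0 mulr0.
  by rewrite sgu // -normrEsg.
apply: (@le_trans _ _ (\sum_k u k 0 * (D *m z') k 0)).
  rewrite !sum_mulmx_trmx -subr_ge0 -sumrB sumr_ge0 // => j _.
  by rewrite -mulrBr dual_certificate_mul_ge0.
apply: ler_sum => k _; apply: le_trans (ler_norm _) _.
by rewrite normrM ler_piMl.
Qed.

End L1Optimality.

Lemma l1D_minimizer_iff (R : realFieldType) m n (D : 'M[R]_(m, n)) M y eps z :
  feasible M y eps z ->
  (forall z', feasible M y eps z' -> l1D D z <= l1D D z') <->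
  exists u, dual_certificate D M y eps z u.
Proof.
move=> fz; split; first exact: minimizer_dual_certificate.
by move=> [u cert]; apply: dual_certificate_minimizer cert.
Qed.

Theorem proposition7 (R : realFieldType) (n : nat) (hn : (3 <= n)%N)
  (M : {set 'I_n}) (y : 'I_n -> R) (zd eta : 'I_n -> R) (eps : R)
  (heps : 0 < eps)
  (hy : forall i, i \in M -> y i = zd i + eta i)
  (heta : forall i, i \in M -> `|eta i| <= eps)
  (z : 'cV[R]_n) (hz : feasible M y eps z) :
  let Aup := [set i in M | y i - z i 0 == eps] in
  let Adown := [set i in M | y i - z i 0 == - eps] in
  let Act := [set i in M | `|y i - z i 0| == eps] in
  is_minimizer M y eps z <->
  exists u : 'cV[R]_(n - 2),
    (forall j, (j \notin M) || (j \in M :\: Act) ->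
       ((D2 R n)^T *m u) j 0 = 0) /\
    (forall k, (D2 R n *m z) k 0 != 0 -> u k 0 = Num.sg ((D2 R n *m z) k 0)) /\
    (forall k, `|u k 0| <= 1) /\
    (forall j, j \in Aup -> 0 <= ((D2 R n)^T *m u) j 0) /\
    (forall j, j \in Adown -> ((D2 R n)^T *m u) j 0 <= 0).
Proof.
move=> Aup Adown Act.
have upE j : (j \in Aup) = up_active M y eps z j by rewrite inE.
have downE j : (j \in Adown) = down_active M y eps z j by rewrite inE.
have up_down j : up_active M y eps z j -> ~~ down_active M y eps z j.
  by move=> /andP [_ /eqP e]; rewrite negb_and; apply/orP; right; apply/eqP; lra.
have inactiveE j : (j \notin M) || (j \in M :\: Act) =
    ~~ up_active M y eps z j && ~~ down_active M y eps z j.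
  rewrite !inE /up_active /down_active eqr_norml (ltW heps) andbT.
  by case: (j \in M); rewrite /= ?andbT ?negb_or.
have minE : is_minimizer M y eps z <->
    forall z', feasible M y eps z' -> l1D (D2 R n) z <= l1D (D2 R n) z'.
  by split=> [[]|].
split=> [/minE/(l1D_minimizer_iff _ hz) [u [sgu normu nup ndown]]|].
  exists u; split; [|split; [by []|split; [by []|split]]] => j.
  - by rewrite inactiveE => /andP [uj dj]; apply: le_anti; rewrite nup ?ndown.
  - by rewrite upE => uj; apply: ndown (up_down _ uj).
  - by rewrite downE => dj; apply: nup; apply: contraL dj; apply: up_down.
move=> [u [zero [sgu [normu [up down]]]]]; apply/minE/(l1D_minimizer_iff _ hz).
exists u; split=> // j nj.
- have [dj|dj] := boolP (down_active M y eps z j); first by apply: down; rewrite downE.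
  by rewrite zero ?lexx // inactiveE nj dj.
- have [uj|uj] := boolP (up_active M y eps z j); first by apply: up; rewrite upE.
  by rewrite zero ?lexx // inactiveE nj uj.
Qed.
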